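(* For a prime $p$ let $F_{pt}:\mathbb{F}_p^2\to\mathbb{F}_p^2$ be the map $F_{pt}(x,y)=(x^3y(x-y),\;xy^3(x-y))$, where $\mathbb{F}_p=\mathbb{Z}/p\mathbb{Z}$. Then: (1) if $p=2^k+1$ for some integer $k\ge 0$, the $(k+1)$-st iterate $F_{pt}^{\circ(k+1)}$ sends every point of $\mathbb{F}_p^2$ to $(0,0)$; (2) for an arbitrary prime $p$, there exists $N\ge1$ such that $F_{pt}^{\circ N}(x,y)=(0,0)$ for every pair $(x,y)\in\mathbb{F}_p^2$ such that either $x=0$, or $y=0$, or $x\neq0$ and $y/x$ has order a power of $2$ in the group $(\mathbb{Z}/p\mathbb{Z})^*$.
   Context: $F_{pt}$ is the reduction modulo $p$ of the integer polynomial map $(x,y)\mapsto(x^3y(x-y),\,xy^3(x-y))$ (called the ''power trap''); $F_{pt}^{\circ n}$ denotes its $n$-fold composition with itself. *)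

From HB Require Import structures.
From mathcomp Require Import all_boot all_order all_algebra all_fingroup.
Set Implicit Arguments. Unset Strict Implicit. Unset Printing Implicit Defensive.
Import GRing.Theory.
Local Open Scope ring_scope.

Definition Fpt (p : nat) (xy : 'F_p * 'F_p) : 'F_p * 'F_p :=
  let: (x, y) := xy in (x ^+ 3 * y * (x - y), x * y ^+ 3 * (x - y)).

Definition Fpt_iter (p n : nat) (xy : 'F_p * 'F_p) : 'F_p * 'F_p :=
  iter n (Fpt (p:=p)) xy.

From mathcomp Require Import all_boot all_order all_algebra all_fingroup.
From mathcomp Require Import ring finfield.

Set Implicit Arguments.
Unset Strict Implicit.
Unset Printing Implicit Defensive.
Local Open Scope ring_scope.
Import GRing.Theory.

(* Away from the zero set of x y (x - y), one application of F_pt squares the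
   ratio y / x, while a point on that zero set is sent to (0, 0) (for y = x
   because of the factor x - y).  Hence if (y / x)^(2^j) = 1 the ratio reaches 1
   after at most j steps and the orbit is trapped at the origin one step later.
   For p = 2^k + 1 every nonzero ratio satisfies this with j = k by Fermat, and
   in general a ratio of order 2^j in F_p^* has j < p, so N = p works. *)

Definition pow2_ratio_root (F : fieldType) (j : nat) (x y : F) :=
  x = 0 \/ y = 0 \/ (x != 0 /\ (y / x) ^+ (2 ^ j) = 1).

Lemma power_trap_ratio (F : fieldType) (x y : F) :
  x ^+ 3 * y * (x - y) != 0 ->
  x * y ^+ 3 * (x - y) / (x ^+ 3 * y * (x - y)) = (y / x) ^+ 2.
Proof.
rewrite !mulf_eq0 !negb_or => /andP[/andP[/and3P[x0 _ _] y0] xy0].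
by field; rewrite x0 y0 xy0.
Qed.

Section PowerTrap.
Variable p : nat.

Lemma Fpt_iter_origin (n : nat) : Fpt_iter (p:=p) n (0, 0) = (0, 0).
Proof.
elim: n => [|n IH] //=; rewrite /Fpt_iter /= -/(Fpt_iter _ _) IH /Fpt.
by rewrite !(mul0r, mulr0).
Qed.

Lemma Fpt_iter_origin_leq (m n : nat) (xy : 'F_p * 'F_p) : (m <= n)%N ->
  Fpt_iter m xy = (0, 0) -> Fpt_iter n xy = (0, 0).
Proof.
move=> le_mn; rewrite /Fpt_iter -(subnK le_mn) iterD => ->.
exact: Fpt_iter_origin.
Qed.

Lemma Fpt_pow2_ratio_root0 (x y : 'F_p) :
  pow2_ratio_root 0 x y -> Fpt (x, y) = (0, 0).
Proof.
rewrite /Fpt; case=> [->|[->|[x0]]]; rewrite ?(expr0n, mul0r, mulr0) //.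
by rewrite expr1 => /(canRL (divfK x0)); rewrite mul1r => ->; rewrite subrr !mulr0.
Qed.

Lemma Fpt_pow2_ratio_rootS (j : nat) (x y : 'F_p) :
  pow2_ratio_root j.+1 x y -> pow2_ratio_root j (Fpt (x, y)).1 (Fpt (x, y)).2.
Proof.
rewrite /Fpt /=; case=> [->|[->|[x0 root_xy]]].
- by left; rewrite expr0n !mul0r.
- by left; rewrite mulr0 mul0r.
have [->|x'0] := eqVneq (x ^+ 3 * y * (x - y)) 0; first by left.
by right; right; rewrite power_trap_ratio // -exprM -expnS.
Qed.

Lemma Fpt_iter_pow2_ratio_root (j : nat) (x y : 'F_p) :
  pow2_ratio_root j x y -> Fpt_iter j.+1 (x, y) = (0, 0).
Proof.
elim: j x y => [|j IH] x y root_xy; first exact: Fpt_pow2_ratio_root0.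
rewrite /Fpt_iter iterSr -/(Fpt_iter _ _).
by case: (Fpt (x, y)) (Fpt_pow2_ratio_rootS root_xy) => [x' y'] /=; apply: IH.
Qed.

Hypothesis p_pr : prime p.

Lemma Fp_expf_pred (a : 'F_p) : a != 0 -> a ^+ p.-1 = 1.
Proof.
move=> a0; apply: (mulfI a0); rewrite -exprS prednK ?prime_gt0 // mulr1.
by rewrite -[X in a ^+ X](card_Fp p_pr) expf_card.
Qed.

Lemma pow2_ratio_root_Fermat (k : nat) (x y : 'F_p) :
  p = (2 ^ k).+1 -> pow2_ratio_root k x y.
Proof.
move=> pk; have [->|x0] := eqVneq x 0; first by left.
have [->|y0] := eqVneq y 0; first by right; left.
right; right; split=> //.
have -> : (2 ^ k)%N = p.-1 by rewrite pk.
by rewrite Fp_expf_pred // mulf_neq0 ?invr_neq0.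
Qed.

Lemma Fp_unit_order_pow2_lt (u : {unit 'F_p}) (j : nat) :
  #[u]%g = (2 ^ j)%N -> (j < p)%N.
Proof.
move=> ord_u; apply: (leq_trans (ltn_expl j (ltnSn 1))).
rewrite -ord_u (leq_trans (max_card _)) // -[X in (_ <= X)%N](card_Fp p_pr).
exact/leq_card/val_inj.
Qed.

Lemma unit_order_pow2_ratio_root (u : {unit 'F_p}) (j : nat) (x y : 'F_p) :
  x != 0 -> val u = y / x -> #[u]%g = (2 ^ j)%N -> pow2_ratio_root j x y.
Proof.
move=> x0 u_xy ord_u; right; right; split=> //.
by rewrite -u_xy -ord_u -FinRing.val_unitX expg_order.
Qed.

End PowerTrap.

Theorem mainTheorem3 (p : nat) (hp : prime p) :
  (forall k : nat, p = (2 ^ k).+1 ->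
     forall xy : 'F_p * 'F_p, Fpt_iter (k.+1) xy = (0, 0)) /\
  (exists N : nat, (1 <= N)%N /\
     forall x y : 'F_p,
       (x = 0 \/ y = 0 \/
        (x != 0 /\ exists (u : {unit 'F_p}) (j : nat),
            val u = y / x /\ #[u]%g = (2 ^ j)%N)) ->
       Fpt_iter N (x, y) = (0, 0)).
Proof.
have p_gt0 := prime_gt0 hp.
split=> [k pk [x y]|].
  exact: Fpt_iter_pow2_ratio_root (pow2_ratio_root_Fermat hp x y pk).
exists p; split=> // x y trapped_xy.
have [j lt_jp root_xy] : exists2 j, (j < p)%N & pow2_ratio_root j x y.
  case: trapped_xy => [x0|[y0|[x0 [u [j [u_xy ord_u]]]]]].
  - by exists 0%N => //; left.
  - by exists 0%N => //; right; left.
  exists j.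
  + exact (Fp_unit_order_pow2_lt hp ord_u).
  + exact: unit_order_pow2_ratio_root x0 u_xy ord_u.
exact: Fpt_iter_origin_leq lt_jp (Fpt_iter_pow2_ratio_root root_xy).
Qed.
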